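(* Let $A,B$ be noncommuting matrices in $\mathrm{SL}_2\mathbb{R}$, both with trace $\ge 2$. Then the pair $A,B$ is coherently oriented if and only if there exists $C\in\mathrm{SL}_2\mathbb{R}$ such that $CAC^{-1}$ and $CBC^{-1}$ have nonnegative entries.
   Context: $\mathrm{SL}_2\mathbb{R}$ acts on $\partial\mathcal{H}=\mathbb{P}^1\mathbb{R}$ by Möbius transformations $\begin{pmatrix}a&b\\c&d\end{pmatrix}*z=(az+b)/(cz+d)$. For a hyperbolic matrix $A$ (trace $>2$), $\alpha^+$ and $\alpha^-$ denote its attracting and repelling fixed points in $\partial\mathcal{H}$; for a parabolic $A$ (trace $2$, $A\neq I$), $\alpha^+=\alpha^-$ is its unique fixed point; similarly $\beta^\pm$ for $B$. The circle $\partial\mathcal{H}$ is cyclically (counterclockwise) ordered, and for distinct $\alpha,\beta$ the closed interval $[\alpha,\beta]$ consists of $\alpha,\beta$ and the points met travelling counterclockwise from $\alpha$ to $\beta$. If $\alpha^+=\beta^+$ let $I^+=\{\alpha^+\}$; otherwise $I^+$ is the one of the intervals $[\alpha^+,\beta^+]$, $[\beta^+,\alpha^+]$ mapped into itself by both $A$ and $B$, if such exists (else undefined). $I^-$ is defined likewise using $A^{-1},B^{-1}$ and $\alpha^-,\beta^-$. The pair $A,B$ is coherently oriented if both $I^+$ and $I^-$ are defined. *)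

From mathcomp Require Import all_boot all_order all_algebra.
From mathcomp Require Import reals.
Set Implicit Arguments. Unset Strict Implicit. Unset Printing Implicit Defensive.
Import Order.TTheory GRing.Theory Num.Theory.
Local Open Scope ring_scope.

Section P1.
Variable R : realType.

Definition SL2 (A : 'M[R]_2) : Prop := \det A = 1.

(* The boundary circle P^1(R) = R ∪ {∞}: [Some z] is z, [None] is ∞. *)
Definition P1 := option R.

Definition hvec (p : P1) : 'cV[R]_2 :=
  match p with
  | Some z => \col_i (if i == 0 then z else 1)
  | None => \col_i (if i == 0 then 1 else 0)
  end.

Definition mob (A : 'M[R]_2) (p : P1) : P1 :=
  let a := A 0 0 in let b := A 0 1 in let c := A 1 0 in let d := A 1 1 in
  match p with
  | Some z => if c * z + d == 0 then None else Some ((a * z + b) / (c * z + d))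
  | None => if c == 0 then None else Some (a / c)
  end.

(* Attracting fixed point alpha^+ of A (trace >= 2, A <> I): the fixed point
   whose homogeneous eigenvalue is >= 1 (for hyperbolic A this is the
   eigenline of the eigenvalue > 1, where the Möbius derivative 1/lambda^2 < 1;
   for parabolic A it is the unique fixed point, eigenvalue 1). *)
Definition attracting_fp (A : 'M[R]_2) (p : P1) : Prop :=
  mob A p = p /\ exists lam : R, 1 <= lam /\ A *m hvec p = lam *: hvec p.

Definition repelling_fp (A : 'M[R]_2) (p : P1) : Prop :=
  mob A p = p /\ exists lam : R, 0 < lam /\ lam <= 1 /\ A *m hvec p = lam *: hvec p.

(* Counterclockwise (= increasing along R, then through ∞) order.
   Auxiliary linear order on P1 with ∞ on top. *)
Definition ple (x y : P1) : bool :=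
  match x, y with
  | _, None => true
  | None, Some _ => false
  | Some u, Some v => u <= v
  end.

Definition in_ccw (a b x : P1) : bool :=
  if ple a b then ple a x && ple x b else ple a x || ple x b.

Definition maps_into_self (A : 'M[R]_2) (a b : P1) : Prop :=
  forall x, in_ccw a b x -> in_ccw a b (mob A x).

Definition I_defined (A B : 'M[R]_2) (a b : P1) : Prop :=
  a = b \/
  (maps_into_self A a b /\ maps_into_self B a b) \/
  (maps_into_self A b a /\ maps_into_self B b a).

Definition coherently_oriented (A B : 'M[R]_2) : Prop :=
  exists ap am bp bm : P1,
    attracting_fp A ap /\ repelling_fp A am /\
    attracting_fp B bp /\ repelling_fp B bm /\
    I_defined A B ap bp /\ I_defined (invmx A) (invmx B) am bm.

Definition nonneg_mx (M : 'M[R]_2) : Prop := forall i j, 0 <= M i j.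

End P1.

(* Möbius maps of positive determinant preserve the cyclic order of P^1, which in
   homogeneous coordinates is the sign of cross(a,x) cross(x,b) cross(b,a); hence the
   existence of I^+ is invariant under conjugation, and so is that of I^-, since
   alpha^- is the attracting fixed point of A^-1.

   If A and B do not commute they do not share both fixed points, so alpha^+ <> beta^+,
   or alpha^- <> beta^- and we pass to the inverses, using X^T = J X^-1 J^-1 in SL_2.
   Conjugating alpha^+ to 0 and beta^+ to infinity makes A lower and B upper triangular
   with positive diagonal, and the invariance of the arc [0, infinity] forces the
   remaining entries to be nonnegative.

   Conversely, a nonnegative matrix of determinant 1 maps the arc [0, infinity]
   monotonically into itself and has a Perron eigenvector there which attracts the
   whole arc, so the arc between the Perron points of A and B is invariant under both;
   applied to the transposes this gives I^-. *)

From mathcomp Require Import all_boot all_order all_algebra.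
From mathcomp Require Import reals ring lra.
Import Order.TTheory GRing.Theory Num.Theory.
Local Open Scope ring_scope.

Set Implicit Arguments. Unset Strict Implicit. Unset Printing Implicit Defensive.

Section Matrix2.
Variable R : comPzRingType.
Implicit Types (M N : 'M[R]_2) (u v : 'cV[R]_2).

Lemma sum_ord2 (F : 'I_2 -> R) : \sum_i F i = F 0 + F 1.
Proof. by rewrite big_ord_recl big_ord1; congr (F _ + F _); apply/val_inj. Qed.

Lemma mulmx2E m n (M : 'M[R]_(m, 2)) (N : 'M[R]_(2, n)) i j :
  (M *m N) i j = M i 0 * N 0 j + M i 1 * N 1 j.
Proof. by rewrite mxE sum_ord2. Qed.

Lemma ord2P (i : 'I_2) : i = 0 \/ i = 1.
Proof. by case: i => [[|[|//]]] ?; [left | right]; apply/val_inj. Qed.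

Lemma det_mx2 M : \det M = M 0 0 * M 1 1 - M 0 1 * M 1 0.
Proof.
rewrite (expand_det_row _ 0) sum_ord2 /cofactor !det_mx11 !mxE /=.
have -> : lift 0 (0 : 'I_1) = 1 :> 'I_2 by apply/val_inj.
have -> : lift 1 (0 : 'I_1) = 0 :> 'I_2 by apply/val_inj.
ring.
Qed.

Lemma eq_mx2 M N : M 0 0 = N 0 0 -> M 0 1 = N 0 1 -> M 1 0 = N 1 0 -> M 1 1 = N 1 1 ->
  M = N.
Proof.
move=> e00 e01 e10 e11; apply/matrixP => i j.
by case: (ord2P i) => ->; case: (ord2P j) => ->.
Qed.

Lemma eq_col2 u v : u 0 0 = v 0 0 -> u 1 0 = v 1 0 -> u = v.
Proof.
move=> e0 e1; apply/matrixP => i j; rewrite [j]ord1.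
by case: (ord2P i) => ->.
Qed.

Definition mx2 (a b c d : R) : 'M[R]_2 :=
  \matrix_(i, j) if i == 0 then (if j == 0 then a else b) else (if j == 0 then c else d).

Lemma mx2E a b c d : (mx2 a b c d 0 0 = a) * (mx2 a b c d 0 1 = b) *
  (mx2 a b c d 1 0 = c) * (mx2 a b c d 1 1 = d).
Proof. by rewrite !mxE. Qed.

Definition Jmx := mx2 0 1 (-1) 0.

Lemma det_Jmx : \det Jmx = 1.
Proof. by rewrite det_mx2 !mx2E; ring. Qed.

Lemma trmx_Jmx M : M^T *m Jmx *m M = \det M *: Jmx.
Proof. by rewrite det_mx2; apply: eq_mx2; rewrite !(mulmx2E, mxE) /=; ring. Qed.

Definition cross u v := u 0 0 * v 1 0 - u 1 0 * v 0 0.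

Lemma cross_swap u v : cross v u = - cross u v.
Proof. by rewrite /cross; ring. Qed.

Lemma crossZl k u v : cross (k *: u) v = k * cross u v.
Proof. by rewrite /cross !mxE; ring. Qed.

Lemma crossZr k u v : cross u (k *: v) = k * cross u v.
Proof. by rewrite /cross !mxE; ring. Qed.

Lemma cross_mulmx M u v : cross (M *m u) (M *m v) = \det M * cross u v.
Proof. by rewrite /cross !mulmx2E det_mx2; ring. Qed.

Lemma cross_self u : cross u u = 0.
Proof. by rewrite /cross mulrC subrr. Qed.

Definition col2 (x y : R) : 'cV[R]_2 := \col_i (if i == 0 then x else y).

Lemma col2E x y : (col2 x y 0 0 = x) * (col2 x y 1 0 = y).
Proof. by rewrite !mxE. Qed.

Lemma col2_inj x y x' y' : col2 x y = col2 x' y' -> x = x' /\ y = y'.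
Proof.
move=> e; split; [rewrite -[x](col2E x y).1 | rewrite -[y](col2E x y).2];
  by rewrite e col2E.
Qed.

Lemma mulmx_col2 M x y :
  M *m col2 x y = col2 (M 0 0 * x + M 0 1 * y) (M 1 0 * x + M 1 1 * y).
Proof. by apply: eq_col2; rewrite mulmx2E !col2E. Qed.

Lemma scale_col2 k x y : k *: col2 x y = col2 (k * x) (k * y).
Proof. by apply: eq_col2; rewrite mxE !col2E. Qed.

Definition orient u x v := cross u x * cross x v * cross v u.

Lemma orientZ k1 k2 k3 u x v :
  orient (k1 *: u) (k2 *: x) (k3 *: v) = (k1 * k2 * k3) ^+ 2 * orient u x v.
Proof. by rewrite /orient !crossZl !crossZr; ring. Qed.

Lemma orient_mulmx M u x v :
  orient (M *m u) (M *m x) (M *m v) = \det M ^+ 3 * orient u x v.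
Proof. by rewrite /orient !cross_mulmx; ring. Qed.

End Matrix2.

Arguments Jmx {R}.

Section UnitMatrix.
Variable R : comUnitRingType.

Lemma unitmx_det1 n (A : 'M[R]_n) : \det A = 1 -> A \in unitmx.
Proof. by move=> dA; rewrite unitmxE dA unitr1. Qed.

Lemma invmxM n (A B : 'M[R]_n) :
  A \in unitmx -> B \in unitmx -> invmx (A *m B) = invmx B *m invmx A.
Proof.
move=> uA uB; have uAB : A *m B \in unitmx by rewrite unitmx_mul uA.
apply: (can_inj (mulKmx uAB)).
by rewrite mulmxV // !mulmxA mulmxK // mulmxV.
Qed.

Lemma Jmx_conj_inv (X : 'M[R]_2) :
  \det X = 1 -> Jmx *m invmx X *m invmx Jmx = X^T.
Proof.
move=> dX; have uJ := unitmx_det1 (det_Jmx R).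
by rewrite -[X^T](mulmxK uJ) -[X^T *m Jmx](mulmxK (unitmx_det1 dX)) trmx_Jmx dX scale1r.
Qed.

End UnitMatrix.

Section Matrix2Field.
Variable R : fieldType.

Lemma eq_mulmx_cross (M N : 'M[R]_2) (u v : 'cV[R]_2) :
  cross u v != 0 -> M *m u = N *m u -> M *m v = N *m v -> M = N.
Proof.
move=> huv hu hv; set P := mx2 (u 0 0) (v 0 0) (u 1 0) (v 1 0).
have uP : P \in unitmx by rewrite unitmxE unitfE det_mx2 !mx2E [v 0 0 * _]mulrC.
have col z (hz : M *m z = N *m z) i :
    M i 0 * z 0 0 + M i 1 * z 1 0 = N i 0 * z 0 0 + N i 1 * z 1 0.
  by rewrite -!mulmx2E hz.
apply: (can_inj (mulmxK uP)).
by apply: eq_mx2; rewrite !mulmx2E !mx2E; apply: col.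
Qed.

Lemma commute_eigenbasis (M N : 'M[R]_2) (u v : 'cV[R]_2) (l1 l2 m1 m2 : R) :
  cross u v != 0 -> M *m u = l1 *: u -> M *m v = l2 *: v ->
  N *m u = m1 *: u -> N *m v = m2 *: v -> M *m N = N *m M.
Proof.
move=> huv Mu Mv Nu Nv; apply: (eq_mulmx_cross huv); rewrite -!mulmxA.
  by rewrite Mu Nu -!scalemxAr Mu Nu !scalerA mulrC.
by rewrite Mv Nv -!scalemxAr Mv Nv !scalerA mulrC.
Qed.

End Matrix2Field.

Section Sign.
Variable R : realFieldType.

(* The two cases of in_ccw_orient: a, b, c stand for cross p x, cross x q, cross p q. *)
Lemma sign_and (a b c : R) : c < 0 -> (0 <= a -> 0 <= b -> 0 <= c) ->
  (a <= 0) && (b <= 0) = (0 <= a * b * - c).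
Proof.
move=> hc pos; rewrite pmulr_lge0 ?oppr_gt0 //.
apply/andP/idP => [[ha hb]|hab]; first exact: mulr_le0.
split; rewrite leNgt; apply/negP => h.
  have hb : 0 <= b by nra.
  by have := pos (ltW h) hb; lra.
have ha : 0 <= a by nra.
by have := pos ha (ltW h); lra.
Qed.

Lemma sign_or (a b c : R) : 0 < c -> (a <= 0 -> b <= 0 -> c <= 0) ->
  (a <= 0) || (b <= 0) = (0 <= a * b * - c).
Proof.
move=> hc neg; rewrite nmulr_lge0 ?oppr_lt0 //.
apply/orP/idP => [[ha|hb]|hab].
- have hb : 0 < b by rewrite ltNge; apply/negP => hb; have := neg ha hb; lra.
  by nra.
- have ha : 0 < a by rewrite ltNge; apply/negP => ha; have := neg ha hb; lra.
  by nra.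
- by case: (lerP a 0) => ha; [left | right; nra].
Qed.

End Sign.

(** * The projective line *)

Section Mobius.
Variable R : realType.
Implicit Types (M N C D X : 'M[R]_2) (u v e f : 'cV[R]_2) (a b p q x y : P1 R).

Lemma hvec_col2 p :
  hvec p = col2 (if p is Some z then z else 1) (if p is Some _ then 1 else 0).
Proof. by case: p. Qed.

Lemma hvec_neq0 p : hvec p != 0.
Proof.
rewrite hvec_col2; apply/eqP => /matrixP h.
case: p h => [z|] h; [have := h 1 0 | have := h 0 0];
  by rewrite col2E mxE => /eqP; rewrite oner_eq0.
Qed.

Definition pt v : P1 R := if v 1 0 == 0 then None else Some (v 0 0 / v 1 0).
Definition hnorm v : R := if v 1 0 == 0 then (v 0 0)^-1 else (v 1 0)^-1.

Lemma col2_neq0 v : v != 0 -> v 1 0 = 0 -> v 0 0 != 0.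
Proof. by move=> /eqP nv v1; apply/eqP => v0; apply: nv; apply: eq_col2; rewrite mxE. Qed.

Lemma hnorm_neq0 v : v != 0 -> hnorm v != 0.
Proof.
by move=> nv; rewrite /hnorm; case: ifP => [/eqP v1|/negbT v1]; rewrite invr_eq0 // col2_neq0.
Qed.

Lemma hvec_pt v : v != 0 -> hvec (pt v) = hnorm v *: v.
Proof.
move=> nv; rewrite /pt /hnorm; case: eqP => v1; apply: eq_col2;
  rewrite hvec_col2 !col2E !mxE ?v1 ?mulr0 //.
- by rewrite mulVf // col2_neq0.
- by rewrite mulrC.
- by rewrite mulVf //; apply/eqP.
Qed.

Lemma pt_scale k v : k != 0 -> pt (k *: v) = pt v.
Proof.
move=> nk; rewrite /pt !mxE mulf_eq0 (negbTE nk) /=.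
by case: eqP => // _; rewrite invfM mulrACA divff // mul1r.
Qed.

Lemma pt_hvec p : pt (hvec p) = p.
Proof.
by case: p => [z|]; rewrite hvec_col2 /pt !col2E /= ?oner_eq0 ?eqxx ?divr1.
Qed.

Lemma mobE M p : mob M p = pt (M *m hvec p).
Proof.
by case: p => [z|]; rewrite /mob /pt hvec_col2 mulmx_col2 !col2E /= ?mulr1 ?mulr0 ?addr0.
Qed.

Lemma mulmx_neq0 M v : \det M != 0 -> v != 0 -> M *m v != 0.
Proof.
move=> dM; have uM : M \in unitmx by rewrite unitmxE unitfE.
by apply: contraNneq => Mv0; rewrite -[v](mulKmx uM) Mv0 mulmx0.
Qed.

Lemma hvec_mob M p :
  \det M != 0 -> hvec (mob M p) = hnorm (M *m hvec p) *: (M *m hvec p).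
Proof. by move=> dM; rewrite mobE hvec_pt // mulmx_neq0 // hvec_neq0. Qed.

Lemma mob_eigen M p l : l != 0 -> M *m hvec p = l *: hvec p -> mob M p = p.
Proof. by move=> nl Mp; rewrite mobE Mp pt_scale // pt_hvec. Qed.

Lemma mob_comp M N p : \det N != 0 -> mob M (mob N p) = mob (M *m N) p.
Proof.
move=> dN; have nNp : N *m hvec p != 0 by rewrite mulmx_neq0 ?hvec_neq0.
by rewrite [mob M _]mobE hvec_mob // -scalemxAr pt_scale ?hnorm_neq0 // mulmxA -mobE.
Qed.

Lemma mob1 p : mob 1%:M p = p.
Proof. by rewrite mobE mul1mx pt_hvec. Qed.

Lemma mobK C : \det C != 0 -> cancel (mob C) (mob (invmx C)).
Proof. by move=> dC p; rewrite mob_comp // mulVmx ?mob1 // unitmxE unitfE. Qed.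

Lemma mobKV C : \det C != 0 -> cancel (mob (invmx C)) (mob C).
Proof.
by move=> dC p; rewrite mob_comp ?mulmxV ?mob1 ?det_inv ?invr_eq0 // unitmxE unitfE.
Qed.

Lemma mob_inj C : \det C != 0 -> injective (mob C).
Proof. by move=> dC; apply: can_inj (mobK dC). Qed.

Lemma ple_cross p q : ple p q = (cross (hvec p) (hvec q) <= 0).
Proof.
case: p => [a|]; case: q => [b|]; rewrite /cross !hvec_col2 !col2E /=.
- by rewrite mulr1 mul1r subr_le0.
- by rewrite mulr0 mul1r sub0r oppr_le0 ler01.
- by rewrite mulr1 mul0r subr0 ler10.
- by rewrite mulr0 mul0r subr0 lexx.
Qed.

Lemma cross_hvec_eq0 p q : (cross (hvec p) (hvec q) == 0) = (p == q).
Proof.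
case: p => [a|]; case: q => [b|]; rewrite /cross !hvec_col2 !col2E /=.
- by rewrite mulr1 mul1r subr_eq0.
- by rewrite mulr0 mul1r sub0r oppr_eq0 oner_eq0.
- by rewrite mulr1 mul0r subr0 oner_eq0.
- by rewrite mulr0 mul0r subr0 !eqxx.
Qed.

Lemma ple_refl p : ple p p.
Proof. by case: p => [a|] /=. Qed.

Lemma ple_trans p q x : ple p q -> ple q x -> ple p x.
Proof. by case: p => [a|]; case: q => [b|]; case: x => [c|] //=; apply: le_trans. Qed.

Lemma ple_total p q : ple p q || ple q p.
Proof. by case: p => [a|]; case: q => [b|] //=; apply: le_total. Qed.

Lemma in_ccw_orient a b x : a != b ->
  in_ccw a b x = (0 <= orient (hvec a) (hvec x) (hvec b)).
Proof.
move=> nab; rewrite /in_ccw /orient !ple_cross (cross_swap (hvec a) (hvec b)).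
have : cross (hvec a) (hvec b) != 0 by rewrite cross_hvec_eq0.
case: ltgtP => [hc|hc|//] _.
- apply: sign_and => // ax xb.
  rewrite -oppr_le0 -cross_swap -ple_cross (@ple_trans b x a) // ple_cross.
    by rewrite cross_swap oppr_le0.
  by rewrite cross_swap oppr_le0.
- apply: sign_or => // ax xb; rewrite -ple_cross.
  by apply: (@ple_trans a x b); rewrite ple_cross.
Qed.

Lemma in_ccw_mob C a b x : 0 < \det C -> a != b ->
  in_ccw (mob C a) (mob C b) (mob C x) = in_ccw a b x.
Proof.
move=> dC nab; have dC0 : \det C != 0 by rewrite gt_eqF.
have k0 y : hnorm (C *m hvec y) != 0 by rewrite hnorm_neq0 // mulmx_neq0 // hvec_neq0.
have nCab : mob C a != mob C b by rewrite (inj_eq (mob_inj dC0)).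
rewrite !in_ccw_orient // !hvec_mob // orientZ orient_mulmx.
rewrite pmulr_rge0; last by rewrite lt_def sqr_ge0 andbT sqrf_eq0 !mulf_neq0.
by rewrite pmulr_rge0 // exprn_gt0.
Qed.

Lemma in_ccw_l a b : in_ccw a b a.
Proof. by rewrite /in_ccw; case: ifP => h; rewrite ple_refl ?h. Qed.

Lemma in_ccw_r a b : in_ccw a b b.
Proof. by rewrite /in_ccw; case: ifP => h; rewrite ple_refl ?h ?orbT. Qed.

Lemma attracting_fpE M p :
  attracting_fp M p <-> exists2 l, 1 <= l & M *m hvec p = l *: hvec p.
Proof.
split=> [[_ [l [l1 Mp]]] | [l l1 Mp]]; first by exists l.
split; last by exists l.
by apply: (mob_eigen _ Mp); rewrite gt_eqF // (lt_le_trans ltr01).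
Qed.

Lemma repelling_fpE M p :
  repelling_fp M p <-> exists2 l, 0 < l <= 1 & M *m hvec p = l *: hvec p.
Proof.
split=> [[_ [l [l0 [l1 Mp]]]] | [l /andP[l0 l1] Mp]]; first by exists l; rewrite ?l0.
by split; [apply: (mob_eigen _ Mp); rewrite gt_eqF | exists l].
Qed.

Lemma eigen_invmx M v l : M \in unitmx -> l != 0 ->
  M *m v = l *: v -> invmx M *m v = l^-1 *: v.
Proof.
move=> uM nl Mv.
by rewrite -[v in LHS]scale1r -(mulVf nl) -scalerA -Mv scalemxAr mulKmx.
Qed.

Lemma repelling_fp_inv M p :
  M \in unitmx -> repelling_fp M p <-> attracting_fp (invmx M) p.
Proof.
move=> uM; split.
  case/repelling_fpE => l /andP[l0 l1] Mp; apply/attracting_fpE.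
  by exists l^-1; [rewrite invf_ge1 | apply: eigen_invmx; rewrite // gt_eqF].
case/attracting_fpE => l l1 Mp; apply/repelling_fpE.
have l0 : 0 < l by apply: lt_le_trans l1.
exists l^-1; first by rewrite invr_gt0 l0 invf_le1.
by rewrite -[M]invmxK; apply: eigen_invmx; rewrite ?unitmx_inv // gt_eqF.
Qed.

Lemma det_conj D M : \det D != 0 -> \det (D *m M *m invmx D) = \det M.
Proof. by move=> dD; rewrite !det_mulmx det_inv mulrAC divff // mul1r. Qed.

Lemma attracting_fp_conj D M p : \det D != 0 -> attracting_fp M p ->
  attracting_fp (D *m M *m invmx D) (mob D p).
Proof.
move=> dD /attracting_fpE[l l1 Mp]; apply/attracting_fpE; exists l => //.
rewrite hvec_mob // -!scalemxAr scalerA mulrC -scalerA; congr (_ *: _).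
by rewrite mulmxA mulmxKV ?unitmxE ?unitfE // -mulmxA Mp scalemxAr.
Qed.

Lemma maps_into_self_conj D M a b : 0 < \det D -> \det M != 0 -> a != b ->
  maps_into_self M a b -> maps_into_self (D *m M *m invmx D) (mob D a) (mob D b).
Proof.
move=> dD dM nab Mab x; have dD0 : \det D != 0 by rewrite gt_eqF.
have -> : mob (D *m M *m invmx D) x = mob D (mob M (mob (invmx D) x)).
  by rewrite !mob_comp ?mulmxA // ?det_mulmx ?det_inv ?mulf_neq0 ?invr_eq0.
by rewrite -{1}[x](mobKV dD0) !in_ccw_mob //; apply: Mab.
Qed.

Lemma I_defined_conj D M N a b : 0 < \det D -> \det M != 0 -> \det N != 0 ->
  I_defined M N a b ->
  I_defined (D *m M *m invmx D) (D *m N *m invmx D) (mob D a) (mob D b).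
Proof.
move=> dD dM dN; have [->|nab] := eqVneq a b; first by left.
case=> [/eqP|[[Ma Na]|[Ma Na]]]; first by rewrite (negbTE nab).
  by right; left; split; apply: maps_into_self_conj.
by right; right; split; apply: maps_into_self_conj; rewrite // eq_sym.
Qed.

Definition I_plus M N :=
  exists p q, [/\ attracting_fp M p, attracting_fp N q & I_defined M N p q].

Lemma I_plus_conj D M N : 0 < \det D -> \det M != 0 -> \det N != 0 ->
  I_plus M N -> I_plus (D *m M *m invmx D) (D *m N *m invmx D).
Proof.
move=> dD dM dN [p [q [Mp Nq pq]]]; have dD0 : \det D != 0 by rewrite gt_eqF.
by exists (mob D p), (mob D q); split; [apply: attracting_fp_conj.. | apply: I_defined_conj].
Qed.

Lemma coherently_orientedE A B : A \in unitmx -> B \in unitmx ->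
  coherently_oriented A B <-> I_plus A B /\ I_plus (invmx A) (invmx B).
Proof.
move=> uA uB; split.
  case=> [ap [am [bp [bm [Aap [Aam [Bbp [Bbm [Ip Im]]]]]]]]].
  by split; [exists ap, bp | exists am, bm; split; rewrite // -repelling_fp_inv].
case=> [[ap [bp [Aap Bbp Ip]]] [am [bm [Aam Bbm Im]]]].
by exists ap, am, bp, bm; rewrite !repelling_fp_inv.
Qed.

(** * Standard position: the forward direction *)

Definition conj_nonneg M N := exists C,
  SL2 C /\ nonneg_mx (C *m M *m invmx C) /\ nonneg_mx (C *m N *m invmx C).

Lemma SL2_to_zero_infinity p q : p != q ->
  exists2 C, \det C = 1 & mob C p = Some 0 /\ mob C q = None.
Proof.
move=> npq; set u := hvec p; set v := hvec q; set k := cross u v.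
have nk : k != 0 by rewrite cross_hvec_eq0.
exists (mx2 (u 1 0) (- u 0 0) (v 1 0 / k) (- v 0 0 / k)).
  by rewrite det_mx2 !mx2E /k /cross; field.
rewrite !mobE /pt; split.
  rewrite (_ : _ *m u = col2 0 1); first by rewrite !col2E oner_eq0 mul0r.
  by apply: eq_col2; rewrite !mulmx2E !mx2E !col2E /k /cross; field.
rewrite (_ : _ *m v = col2 (- k) 0); first by rewrite !col2E eqxx.
by apply: eq_col2; rewrite !mulmx2E !mx2E !col2E /k /cross; field.
Qed.

Lemma nonneg_attracting_zero X : \det X = 1 -> attracting_fp X (Some 0) ->
  maps_into_self X (Some 0) None -> nonneg_mx X.
Proof.
move=> dX /attracting_fpE[l l1]; rewrite hvec_col2 mulmx_col2 scale_col2 /=.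
case/col2_inj; rewrite !mulr0 !mulr1 !add0r => X01 X11 /(_ None (in_ccw_r _ _)) Xinf.
have X00 : 0 < X 0 0 by move: dX; rewrite det_mx2 X01 X11 mul0r subr0; nra.
have X10 : 0 <= X 1 0.
  move: Xinf; rewrite /in_ccw /mob /=; case: eqP => [-> //|_].
  by rewrite /= andbT pmulr_rge0 // invr_ge0.
by move=> i j; case: (ord2P i) => ->; case: (ord2P j) => ->; lra.
Qed.

Lemma nonneg_attracting_infinity X : \det X = 1 -> attracting_fp X None ->
  maps_into_self X (Some 0) None -> nonneg_mx X.
Proof.
move=> dX /attracting_fpE[l l1]; rewrite hvec_col2 mulmx_col2 scale_col2 /=.
case/col2_inj; rewrite !mulr0 !mulr1 !addr0 => X00 X10 /(_ (Some 0) (in_ccw_l _ _)).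
have X11 : 0 < X 1 1 by move: dX; rewrite det_mx2 X10 X00 mulr0 subr0; nra.
rewrite /in_ccw /mob /= X10 !mulr0 !add0r (gt_eqF X11) /= andbT pmulr_lge0 ?invr_gt0 //.
by move=> X01 i j; case: (ord2P i) => ->; case: (ord2P j) => ->; lra.
Qed.

Lemma conj_nonneg_of_arc M N p q : \det M = 1 -> \det N = 1 ->
  attracting_fp M p -> attracting_fp N q -> p != q ->
  maps_into_self M p q -> maps_into_self N p q -> conj_nonneg M N.
Proof.
move=> dM dN Mp Nq npq Mpq Npq.
have [C dC [Cp Cq]] := SL2_to_zero_infinity npq.
have dC0 : \det C != 0 by rewrite dC oner_eq0.
have arc X : \det X = 1 -> maps_into_self X p q ->
    maps_into_self (C *m X *m invmx C) (Some 0) None.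
  move=> dX Xpq; rewrite -Cp -Cq.
  by apply: maps_into_self_conj; rewrite ?dC ?dX ?ltr01 ?oner_eq0.
exists C; split=> //; split.
  apply: nonneg_attracting_zero; last exact: arc.
    by rewrite det_conj.
  by rewrite -Cp; apply: attracting_fp_conj.
apply: nonneg_attracting_infinity; last exact: arc.
  by rewrite det_conj.
by rewrite -Cq; apply: attracting_fp_conj.
Qed.

Lemma conj_nonneg_of_I_defined M N p q : \det M = 1 -> \det N = 1 ->
  attracting_fp M p -> attracting_fp N q -> p != q -> I_defined M N p q ->
  conj_nonneg M N.
Proof.
move=> dM dN Mp Nq npq [/eqP|[[Mpq Npq]|[Mqp Nqp]]]; first by rewrite (negbTE npq).
  exact: conj_nonneg_of_arc Mpq Npq.
have [|C [sC [CN CM]]] := conj_nonneg_of_arc dN dM Nq Mp _ Nqp Mqp.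
  by rewrite eq_sym.
by exists C.
Qed.

Lemma conj_nonneg_inv M N : \det M = 1 -> \det N = 1 ->
  conj_nonneg M N -> conj_nonneg (invmx M) (invmx N).
Proof.
move=> dM dN [C [dC [CM CN]]]; exists (Jmx *m C).
have uC := unitmx_det1 dC; have uJ := unitmx_det1 (det_Jmx R).
have conjT X : \det X = 1 -> nonneg_mx (C *m X *m invmx C) ->
    nonneg_mx (Jmx *m C *m invmx X *m invmx (Jmx *m C)).
  move=> dX CX; have uX := unitmx_det1 dX.
  have -> : Jmx *m C *m invmx X *m invmx (Jmx *m C) =
      Jmx *m invmx (C *m X *m invmx C) *m invmx Jmx.
    by rewrite !invmxM ?unitmx_mul ?unitmx_inv ?uC ?uX // invmxK !mulmxA.
  by rewrite Jmx_conj_inv ?det_conj ?dC ?oner_eq0 // => i j; rewrite mxE.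
by split; [rewrite /SL2 det_mulmx det_Jmx dC mulr1 | split; apply: conjT].
Qed.

Lemma eigenvalue_unique M p l m :
  M *m hvec p = l *: hvec p -> M *m hvec p = m *: hvec p -> l = m.
Proof.
move=> -> /eqP; rewrite -subr_eq0 -scalerBl scaler_eq0 (negbTE (hvec_neq0 p)) orbF.
by rewrite subr_eq0 => /eqP.
Qed.

Lemma parabolic_form M z : \det M = 1 -> M *m hvec (Some z) = hvec (Some z) ->
  exists c, M = mx2 (1 + c * z) (- (c * z * z)) c (1 - c * z).
Proof.
move=> dM; rewrite hvec_col2 mulmx_col2 /= !mulr1 => /col2_inj[e0 e1].
have M11 : M 1 1 = 1 - M 1 0 * z by lra.
have M01 : M 0 1 = z - M 0 0 * z by lra.
have M00 : M 0 0 = 1 + M 1 0 * z by rewrite -dM det_mx2 M11 M01; ring.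
by exists (M 1 0); apply: eq_mx2; rewrite !mx2E // M01 M00; ring.
Qed.

Lemma parabolic_form_infinity M : \det M = 1 -> M *m hvec None = hvec None ->
  exists c, M = mx2 1 c 0 1.
Proof.
move=> dM; rewrite hvec_col2 mulmx_col2 /= !mulr0 !mulr1 !addr0 => /col2_inj[M00 M10].
have M11 : M 1 1 = 1 by move: dM; rewrite det_mx2 M00 M10 mulr0 subr0 mul1r.
by exists (M 0 1); apply: eq_mx2; rewrite !mx2E.
Qed.

Lemma commute_parabolic M N p : \det M = 1 -> \det N = 1 ->
  M *m hvec p = hvec p -> N *m hvec p = hvec p -> M *m N = N *m M.
Proof.
case: p => [z|] dM dN Mp Np.
  have [c ->] := parabolic_form dM Mp; have [d ->] := parabolic_form dN Np.
  by apply: eq_mx2; rewrite !mulmx2E !mx2E; ring.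
have [c ->] := parabolic_form_infinity dM Mp; have [d ->] := parabolic_form_infinity dN Np.
by apply: eq_mx2; rewrite !mulmx2E !mx2E; ring.
Qed.

Lemma fixed_points_commute M N p q : \det M = 1 -> \det N = 1 ->
  attracting_fp M p -> repelling_fp M q -> attracting_fp N p -> repelling_fp N q ->
  M *m N = N *m M.
Proof.
move=> dM dN /attracting_fpE[l1 hl1 Mp] /repelling_fpE[l2 /andP[_ hl2] Mq].
move=> /attracting_fpE[m1 hm1 Np] /repelling_fpE[m2 /andP[_ hm2] Nq].
have [epq|npq] := eqVneq p q; last first.
  by apply: (commute_eigenbasis _ Mp Mq Np Nq); rewrite cross_hvec_eq0.
rewrite -{}epq in Mq Nq.
have l1E : l1 = 1 by have := eigenvalue_unique Mp Mq; lra.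
have m1E : m1 = 1 by have := eigenvalue_unique Np Nq; lra.
by apply: (commute_parabolic dM dN (p := p)); rewrite ?Mp ?Np ?l1E ?m1E scale1r.
Qed.

(** * Perron vectors: the converse *)

Definition nonneg_col v := (0 <= v 0 0) && (0 <= v 1 0).

Lemma nonneg_col_mulmx M v : nonneg_mx M -> nonneg_col v -> nonneg_col (M *m v).
Proof.
by move=> M0 /andP[v0 v1]; apply/andP; split; rewrite mulmx2E addr_ge0 ?mulr_ge0.
Qed.

Lemma hnorm_gt0 v : nonneg_col v -> v != 0 -> 0 < hnorm v.
Proof.
move=> /andP[v0 v1] nv; rewrite lt_def hnorm_neq0 //= /hnorm.
by case: ifP; rewrite invr_ge0.
Qed.

Lemma nonneg_col_hvec p : ple (Some 0) p -> nonneg_col (hvec p).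
Proof.
by rewrite hvec_col2 /nonneg_col !col2E; case: p => [z|] /= hz; rewrite ?hz ?ler01 ?lexx.
Qed.

Lemma ple0_pt v : nonneg_col v -> ple (Some 0) (pt v).
Proof. by case/andP => v0 v1; rewrite /pt; case: eqP => //= _; rewrite divr_ge0. Qed.

Lemma hnorm_mob_gt0 M x : nonneg_mx M -> \det M != 0 -> ple (Some 0) x ->
  0 < hnorm (M *m hvec x).
Proof.
move=> M0 dM x0.
by rewrite hnorm_gt0 ?nonneg_col_mulmx ?nonneg_col_hvec ?mulmx_neq0 ?hvec_neq0.
Qed.

Lemma perron_root (a b c d : R) : 0 <= a -> 0 <= b -> 0 <= c -> 0 <= d ->
  a * d - b * c = 1 ->
  exists l, [/\ 1 <= l, (l - a) * (l - d) = b * c, 0 <= l - a & 0 <= l - d].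
Proof.
move=> a0 b0 c0 d0 det1; set t := a + d.
have t4 : 0 <= t ^+ 2 - 4 by have := sqr_ge0 (a - d); have := mulr_ge0 b0 c0; rewrite /t; nra.
set s := Num.sqrt (t ^+ 2 - 4).
have s0 : 0 <= s := sqrtr_ge0 _.
have s2 : s ^+ 2 = t ^+ 2 - 4 by rewrite sqr_sqrtr.
have t2 : 2 <= t by rewrite /t in t4 *; nra.
have prod : ((t + s) / 2 - a) * ((t + s) / 2 - d) = b * c.
  have -> : ((t + s) / 2 - a) * ((t + s) / 2 - d) = (s ^+ 2 - t ^+ 2) / 4 + a * d.
    by rewrite /t; field.
  by rewrite s2; lra.
have sum : ((t + s) / 2 - a) + ((t + s) / 2 - d) = s by rewrite /t; field.
by exists ((t + s) / 2); split=> //; nra.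
Qed.

(* cross (M *m u) u has the sign telling on which side of u the point M u lies. *)
Definition contracts_toward M e := forall u, nonneg_col u ->
  exists2 g, 0 <= g & cross (M *m u) u = g * cross e u.

Definition perron_vector M e := [/\ nonneg_col e, e != 0,
  exists2 l, 1 <= l & M *m e = l *: e & contracts_toward M e].

(* For l a root of the characteristic polynomial, (b, l - a) and (l - d, c) are
   l-eigenvectors of M = [a b; c d]; their sum is nonnegative and vanishes only for M = 1. *)
Definition perron_col M l := col2 (M 0 1 + (l - M 1 1)) (M 1 0 + (l - M 0 0)).

Lemma perron_col_eigen M l : (l - M 0 0) * (l - M 1 1) = M 0 1 * M 1 0 ->
  M *m perron_col M l = l *: perron_col M l.
Proof. by move=> prod; rewrite mulmx_col2 scale_col2; congr col2; nra. Qed.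

Lemma perron_col_sum_gt0 M l : nonneg_mx M -> \det M = 1 -> M != 1%:M ->
  (l - M 0 0) * (l - M 1 1) = M 0 1 * M 1 0 -> 0 <= l - M 0 0 -> 0 <= l - M 1 1 ->
  0 < perron_col M l 0 0 + perron_col M l 1 0.
Proof.
move=> M0 dM nM1 prod la ld; have := M0 0 1; have := M0 1 0 => c0 b0.
rewrite !col2E lt_def; apply/andP; split; last by lra.
apply: (contraNneq _ nM1) => K0; apply/eqP.
have [b1 c1 la1 ld1] : [/\ M 0 1 = 0, M 1 0 = 0, M 0 0 = l & M 1 1 = l] by split; lra.
have l1 : l = 1 by move: dM; rewrite det_mx2 b1 c1 la1 ld1 mulr0 subr0; have := M0 0 0; nra.
apply/matrixP => i j; rewrite !mxE.
by case: (ord2P i) => ->; case: (ord2P j) => -> /=; rewrite ?b1 ?c1 ?la1 ?ld1.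
Qed.

Lemma perron_col_contracts M l : nonneg_mx M ->
  (l - M 0 0) * (l - M 1 1) = M 0 1 * M 1 0 -> 0 <= l - M 0 0 -> 0 <= l - M 1 1 ->
  0 < perron_col M l 0 0 + perron_col M l 1 0 -> contracts_toward M (perron_col M l).
Proof.
move=> M0 prod la ld; rewrite !col2E => K0 u /andP[u0 u1].
set K := _ + _ in K0.
set F := (M 0 1 + (l - M 0 0)) * u 1 0 + (M 1 0 + (l - M 1 1)) * u 0 0.
have F0 : 0 <= F by rewrite /F; have := M0 0 1; have := M0 1 0; nra.
exists (F / K); first exact: divr_ge0 F0 (ltW K0).
apply: (mulfI (lt0r_neq0 K0)); rewrite [RHS]mulrA [K * (F / K)]mulrC divfK ?lt0r_neq0 //.
have -> : K * cross (M *m u) u = F * cross (perron_col M l) u +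
    (M 0 1 * M 1 0 - (l - M 0 0) * (l - M 1 1)) * (u 1 0 ^+ 2 - u 0 0 ^+ 2).
  by rewrite /K /F /cross !mulmx2E !col2E; ring.
by rewrite prod subrr mul0r addr0.
Qed.

Lemma perron_vector_one : perron_vector 1%:M (col2 1 0).
Proof.
split; rewrite /nonneg_col ?col2E ?ler01 ?lexx //.
- exact: (hvec_neq0 None).
- by exists 1; rewrite ?mul1mx ?scale1r.
- by move=> u _; exists 0; rewrite ?mul1mx ?cross_self ?mul0r.
Qed.

Lemma perron_vector_exists M : nonneg_mx M -> \det M = 1 -> exists e, perron_vector M e.
Proof.
move=> M0 dM; have [->|nM1] := eqVneq M 1%:M.
  by exists (col2 1 0); apply: perron_vector_one.
have := dM; rewrite det_mx2 => dM'.
have [l [l1 prod la ld]] := perron_root (M0 0 0) (M0 0 1) (M0 1 0) (M0 1 1) dM'.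
have K0 := perron_col_sum_gt0 M0 dM nM1 prod la ld.
exists (perron_col M l); split.
- have := M0 0 1; have := M0 1 0; rewrite /nonneg_col !col2E => c0 b0.
  by apply/andP; split; lra.
- by apply: contraTneq K0 => ->; rewrite !mxE addr0 ltxx.
- by exists l; rewrite // perron_col_eigen.
- exact: perron_col_contracts.
Qed.

Lemma attracting_fp_perron M e : perron_vector M e -> attracting_fp M (pt e).
Proof.
case=> _ ne [l l1 Me] _; apply/attracting_fpE; exists l => //.
by rewrite hvec_pt // -scalemxAr Me !scalerA mulrC.
Qed.

Lemma mob_mono M x y : nonneg_mx M -> 0 < \det M ->
  ple (Some 0) x -> ple (Some 0) y -> ple x y -> ple (mob M x) (mob M y).
Proof.
move=> M0 dM x0 y0; have dM0 : \det M != 0 by rewrite gt_eqF.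
rewrite !ple_cross !hvec_mob // crossZl crossZr cross_mulmx.
by rewrite !pmulr_rle0 ?hnorm_mob_gt0.
Qed.

Lemma mob_toward M e x : nonneg_mx M -> \det M != 0 -> perron_vector M e ->
  ple (Some 0) x -> (ple (pt e) x -> ple (mob M x) x) /\ (ple x (pt e) -> ple x (mob M x)).
Proof.
move=> M0 dM [e0 ne _ Me] x0; have [g g0 Mx] := Me _ (nonneg_col_hvec x0).
rewrite !ple_cross hvec_mob // hvec_pt // !crossZl !crossZr.
rewrite !pmulr_rle0 ?hnorm_mob_gt0 ?hnorm_gt0 //.
rewrite (cross_swap e) (cross_swap (M *m hvec x)) !oppr_le0 Mx.
by split=> h; [apply: mulr_ge0_le0 | apply: mulr_ge0].
Qed.

Lemma maps_into_self_perron M N e f :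
  nonneg_mx M -> \det M = 1 -> perron_vector M e ->
  nonneg_mx N -> \det N = 1 -> perron_vector N f -> ple (pt e) (pt f) ->
  maps_into_self M (pt e) (pt f) /\ maps_into_self N (pt e) (pt f).
Proof.
move=> M0 dM Me N0 dN Nf ef; rewrite /maps_into_self /in_ccw ef.
have e0 : ple (Some 0) (pt e) by case: Me => /ple0_pt.
have [Mfix _] := attracting_fp_perron Me; have [Nfix _] := attracting_fp_perron Nf.
have dM0 : 0 < \det M by rewrite dM ltr01.
have dN0 : 0 < \det N by rewrite dN ltr01.
split=> x /andP[ex xf]; have x0 := ple_trans e0 ex; apply/andP; split.
- by rewrite -Mfix mob_mono.
- by apply: ple_trans xf; apply: (mob_toward M0 _ Me x0).1; rewrite ?gt_eqF.
- by apply: ple_trans ex _; apply: (mob_toward N0 _ Nf x0).2; rewrite ?gt_eqF.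
- by rewrite -Nfix mob_mono // (ple_trans x0 xf).
Qed.

Lemma I_plus_nonneg M N : nonneg_mx M -> \det M = 1 -> nonneg_mx N -> \det N = 1 ->
  I_plus M N.
Proof.
move=> M0 dM N0 dN; have [e Me] := perron_vector_exists M0 dM.
have [f Nf] := perron_vector_exists N0 dN.
exists (pt e), (pt f); split; try exact: attracting_fp_perron.
have [ef|fe] := orP (ple_total (pt e) (pt f)); right; [left | right].
  exact: maps_into_self_perron.
by have [] := maps_into_self_perron N0 dN Nf M0 dM Me fe.
Qed.

Lemma I_plus_of_conj_nonneg M N : \det M = 1 -> \det N = 1 -> conj_nonneg M N ->
  I_plus M N.
Proof.
move=> dM dN [C [dC [CM CN]]].
have uC := unitmx_det1 dC.
have dC0 : \det C != 0 by rewrite dC oner_eq0.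
have back X : invmx C *m (C *m X *m invmx C) *m invmx (invmx C) = X.
  by rewrite invmxK !mulmxA mulVmx // mul1mx mulmxKV.
rewrite -(back M) -(back N); apply: I_plus_conj.
- by rewrite det_inv dC invr1 ltr01.
- by rewrite det_conj // dM oner_eq0.
- by rewrite det_conj // dN oner_eq0.
- by apply: I_plus_nonneg; rewrite // det_conj.
Qed.

Lemma conj_nonneg_of_I_plus A B : \det A = 1 -> \det B = 1 -> A *m B != B *m A ->
  I_plus A B -> I_plus (invmx A) (invmx B) -> conj_nonneg A B.
Proof.
move=> dA dB nAB [ap [bp [Aap Bbp Ip]]] [am [bm [Aam Bbm Im]]].
have dAi : \det (invmx A) = 1 by rewrite det_inv dA invr1.
have dBi : \det (invmx B) = 1 by rewrite det_inv dB invr1.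
have [eqp|npq] := eqVneq ap bp; first last.
  by apply: conj_nonneg_of_I_defined Ip.
have [eqm|nm] := eqVneq am bm; first last.
  rewrite -[A]invmxK -[B]invmxK; apply: conj_nonneg_inv => //.
  by apply: conj_nonneg_of_I_defined Im.
have Arep : repelling_fp A am by apply/repelling_fp_inv; rewrite ?unitmx_det1.
have Brep : repelling_fp B am by apply/repelling_fp_inv; rewrite ?unitmx_det1 ?eqm.
by case/eqP: nAB; apply: (fixed_points_commute dA dB Aap Arep _ Brep); rewrite eqp.
Qed.

End Mobius.

Theorem lemma2p2 (R : realType) (A B : 'M[R]_2) :
  SL2 A -> SL2 B -> A *m B != B *m A ->
  2%:R <= \tr A -> 2%:R <= \tr B ->
  (coherently_oriented A B <->
   exists C : 'M[R]_2, SL2 C /\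
     nonneg_mx (C *m A *m invmx C) /\ nonneg_mx (C *m B *m invmx C)).
Proof.
move=> dA dB nAB _ _.
have [dAi dBi] : \det (invmx A) = 1 /\ \det (invmx B) = 1 by rewrite !det_inv dA dB invr1.
rewrite coherently_orientedE ?unitmx_det1 //; split.
  by case; apply: conj_nonneg_of_I_plus.
by move=> CAB; split; apply: I_plus_of_conj_nonneg => //; apply: conj_nonneg_inv.
Qed.
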